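(* For every numerical semigroup $\Lambda$, \[ c'(\Lambda) \ge \frac{c(\Lambda)}{e(\Lambda)} - \frac{(m(\Lambda)-1)(e(\Lambda)-2)}{2\,e(\Lambda)}. \]
   Context: A numerical semigroup is a subset $\Lambda \subseteq \mathbb{Z}_{\ge 0}$ that contains $0$, is closed under addition, and has finite complement in $\mathbb{Z}_{\ge 0}$. Every numerical semigroup has a unique minimal (with respect to inclusion) generating set, which is finite; its size is the embedding dimension $e(\Lambda)$. The conductor is $c(\Lambda) = \max(\mathbb{Z}_{\ge 0}\setminus\Lambda) + 1$ (with $c(\Lambda)=0$ if $\Lambda = \mathbb{Z}_{\ge 0}$). Define $c'(\Lambda) = |\{\lambda \in \Lambda : \lambda < c(\Lambda)\}|$. The multiplicity is $m(\Lambda) = \min(\Lambda\setminus\{0\})$. *)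

From HB Require Import structures.
From mathcomp Require Import all_boot all_order all_algebra.
Set Implicit Arguments. Unset Strict Implicit. Unset Printing Implicit Defensive.

Definition numerical_semigroup (L : pred nat) : Prop :=
  [/\ L 0,
      (forall a b, L a -> L b -> L (a + b)) &
      exists N, forall n, N <= n -> L n].

Inductive in_span (G : seq nat) : nat -> Prop :=
  | span0 : in_span G 0
  | spanS g n : g \in G -> in_span G n -> in_span G (g + n).

Definition generates (G : seq nat) (L : pred nat) : Prop :=
  forall n, L n <-> in_span G n.

Definition minimal_generating_set (G : seq nat) (L : pred nat) : Prop :=
  [/\ uniq G, generates G L &
      forall H : seq nat, {subset H <= G} -> generates H L -> {subset G <= H}].

(* c is the conductor: max(N \ L) + 1, or 0 if L = N *)
Definition is_conductor (L : pred nat) (c : nat) : Prop :=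
  (forall n, c <= n -> L n) /\ (c = 0 \/ ~~ L c.-1).

Definition is_multiplicity (L : pred nat) (m : nat) : Prop :=
  [/\ 0 < m, L m & forall x, 0 < x -> L x -> m <= x].

Definition cprime (L : pred nat) (c : nat) : nat := count L (iota 0 c).

From HB Require Import structures.
From mathcomp Require Import all_boot all_order all_algebra.
From mathcomp Require Import zify ring lra.
Import Order.TTheory GRing.Theory Num.Theory.

Set Implicit Arguments.
Unset Strict Implicit.
Unset Printing Implicit Defensive.

(* For every residue r < m let  w_r = apery r  be the least element of L
   congruent to r mod m, and W = c + m - 1, so that every w_r <= W.
   - Selmer's formula: sum_r w_r = m(m-1)/2 + m g, with g = c - c' the number
     of gaps of L (Section Apery, [sum_apery_double]).
   - For x in the span of G, x <= sum_(h in G) h N_h(x), where N_h(x) counts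
     the t >= 1 with x - t h in L ([span_le_rep_counts]).  For an Apery element
     N_m(w_r) = 0, while for any h in L,  h sum_r N_h(w_r) <= sum_r (W - w_r):
     for fixed t the map r |-> (w_r - t h) mod m injects the residues with
     w_r - t h in L into those r' with t h <= W - w_r' ([count_translates]).
   - Summing over the e - 1 generators other than m (m is a generator) gives
     S <= (e - 1)(m W - S) for S = sum_r w_r ([sum_apery_le]).
   Substituting Selmer's formula and dividing by m yields
   2g + (m-1) <= (e-1)(2c' + m - 1), which is the theorem ([gap_inequality],
   [conductor_bound_rat]). *)

Lemma count_sum (T : Type) (a : pred T) (s : seq T) :
  count a s = \sum_(x <- s) (a x : nat).
Proof. by rewrite -sum1_count big_mkcond; apply: eq_bigr => x _; case: (a x). Qed.

Lemma sum_count_exchange (R : nat -> nat -> bool) (s u : seq nat) :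
  \sum_(r <- s) count (R r) u = \sum_(t <- u) count (R^~ t) s.
Proof.
rewrite (eq_bigr (fun r => \sum_(t <- u) (R r t : nat))) => [|r _]; last exact: count_sum.
by rewrite exchange_big; apply: eq_bigr => t _; rewrite count_sum.
Qed.

Lemma count_mul_le h D T : h * count (fun t => t * h <= D) (iota 1 T) <= D.
Proof.
elim: T => [|T IH]; first by rewrite muln0.
rewrite -[T.+1]addn1 iotaD count_cat /=.
case: (leqP ((1 + T) * h) D) => [le_D|_] /=; rewrite !addn0 //.
apply: leq_trans le_D; rewrite addn1 add1n mulnC leq_mul2r ltnS.
by rewrite -[T in _ <= T](size_iota 1) count_size orbT.
Qed.

Lemma downclosed_le (P : pred nat) : (forall j, P j.+1 -> P j) ->
  forall i j, i <= j -> P j -> P i.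
Proof.
move=> dc i j /subnKC <-; elim: (j - i) => [|k IH]; first by rewrite addn0.
by rewrite addnS => /dc.
Qed.

Lemma count_downclosed (P : pred nat) K : (forall j, P j.+1 -> P j) ->
  forall j, j < K -> P j = (j < count P (iota 0 K)).
Proof.
move=> dc j jK; apply/idP/idP => [Pj|].
- rewrite -(subnKC jK) iotaD count_cat.
  have : all P (iota 0 j.+1).
    by apply/allP => i; rewrite mem_iota => /andP [_ ij]; apply: downclosed_le Pj.
  by rewrite all_count => /eqP ->; rewrite size_iota leq_addr.
- apply: contraLR => nPj; rewrite -leqNgt -(subnKC (ltnW jK)) iotaD count_cat.
  have -> : count P (iota (0 + j) (K - j)) = 0.
    apply/eqP; rewrite -leqn0 leqNgt -has_count; apply/hasPn => i.
    by rewrite mem_iota => /andP [ji _]; apply: contra nPj; apply: downclosed_le.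
  by rewrite addn0 -[j in _ <= j](size_iota 0) count_size.
Qed.

Lemma count_iota_residues (P : pred nat) K m :
  count P (iota 0 (K * m)) = \sum_(0 <= r < m) count (fun j => P (r + j * m)) (iota 0 K).
Proof.
elim: K => [|K IH]; first by rewrite mul0n big1.
rewrite mulSnr iotaD count_cat IH add0n -{1}[K * m]addn0 iotaDl count_map.
rewrite count_sum /index_iota subn0 -big_split; apply: eq_bigr => r _.
by rewrite -addn1 iotaD count_cat /= addn0 add0n [r + _]addnC.
Qed.

Lemma sum_iota_double n : (\sum_(0 <= r < n) r).*2 = n * n.-1.
Proof.
elim: n => [|n IH]; first by rewrite big_geq.
by rewrite big_nat_recr //= doubleD IH; case: n {IH} => [|n] //=; lia.
Qed.

Lemma mem_mul (L : pred nat) h t : L 0 -> (forall a b, L a -> L b -> L (a + b)) ->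
  L h -> L (t * h).
Proof. by move=> L0 L_add Lh; elim: t => [//|t IH]; rewrite mulSn L_add. Qed.

Definition rep_count (L : pred nat) (T x h : nat) : nat :=
  count (fun t => (t * h <= x) && L (x - t * h)) (iota 1 T).

Section Generators.
Variables (L : pred nat) (G : seq nat) (T : nat).
Hypothesis L_add : forall a b, L a -> L b -> L (a + b).
Hypothesis G_gen : generates G L.

Lemma mem_generators g : g \in G -> L g.
Proof. by move=> gG; apply/G_gen; rewrite -[g]addn0; apply: spanS gG (span0 G). Qed.

(* The multiplicity cannot be a sum of smaller positive elements, so it is a generator. *)
Lemma multiplicity_mem_generators m : is_multiplicity L m -> m \in G.
Proof.
move=> [m_gt0 Lm m_min].
suff span_le : forall x, in_span G x -> 0 < x -> x <= m -> m \in G.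
  by apply: span_le m_gt0 (leqnn m); apply/G_gen.
move=> x; elim=> [//|g n gG _ IH] x_gt0 le_m.
have [g0|g_gt0] := posnP g; first by move: x_gt0 le_m; rewrite g0 add0n; exact: IH.
suff -> : m = g by [].
by apply/eqP; rewrite eqn_leq m_min ?(mem_generators gG) // (leq_trans _ le_m) ?leq_addr.
Qed.

Lemma rep_count_addl g n h : L g -> rep_count L T n h <= rep_count L T (g + n) h.
Proof.
move=> Lg; apply: sub_count => t /= /andP [th Lnt].
by rewrite -addnBA // L_add // andbT (leq_trans th) ?leq_addl.
Qed.

(* Adding g itself creates the representation t = 1 and shifts the others. *)
Lemma rep_count_step g n : 0 < g -> L n -> g + n <= T ->
  (rep_count L T n g).+1 <= rep_count L T (g + n) g.
Proof.
move=> g0 Ln le_T; have T0 : 0 < T by lia.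
rewrite /rep_count -(prednK T0) -{1}(addn1 T.-1) iotaD count_cat /=.
have -> : (1 + T.-1) * g <= n = false by apply/negbTE; nia.
rewrite mul1n leq_addr addKn Ln !addn0 add1n ltnS (iotaDl 1 1) count_map.
apply: sub_count => t /= /andP [tn Lnt].
by rewrite mulnDl mul1n leq_add2l tn subnDA addKn.
Qed.

Lemma span_le_rep_counts x : in_span G x -> x <= T ->
  x <= \sum_(h <- G) h * rep_count L T x h.
Proof.
elim=> [//|g n gG span_n IH] le_T.
have Ln : L n by apply/G_gen.
have {}IH := IH (leq_trans (leq_addl g n) le_T).
have [->|g0] := posnP g; first by rewrite add0n.
have Lg := mem_generators gG.
apply: leq_trans (leq_add (leqnn g) IH) _; rewrite !(big_rem _ gG) /= addnA leq_add //.
- by rewrite -mulnS leq_mul2l rep_count_step ?orbT.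
- by apply: leq_sum => h _; rewrite leq_mul2l rep_count_addl ?orbT.
Qed.
End Generators.

Section Apery.
Variables (L : pred nat) (m c : nat).
Hypothesis L_0 : L 0.
Hypothesis L_add : forall a b, L a -> L b -> L (a + b).
Hypothesis L_m : L m.
Hypothesis m_gt0 : 0 < m.
Hypothesis L_conductor : forall n, c <= n -> L n.

(* Number of j with r + j m outside L; since L is closed under adding m these
   j form an initial segment, so apery r is the least element of L that is
   congruent to r modulo m (for r < m). *)
Definition apery_depth (r : nat) : nat := count (fun j => ~~ L (r + j * m)) (iota 0 c).

Definition apery (r : nat) : nat := r + apery_depth r * m.

Lemma mem_progression r j : L (r + j * m) = (apery_depth r <= j).
Proof.
have [jc|cj] := ltnP j c.
- have dc i : ~~ L (r + i.+1 * m) -> ~~ L (r + i * m).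
    by apply: contra => Li; rewrite mulSnr addnA L_add.
  by rewrite leqNgt -(@count_downclosed _ _ dc _ jc) negbK.
- rewrite L_conductor; last by nia.
  by rewrite (leq_trans _ cj) // -[c in _ <= c](size_iota 0) count_size.
Qed.

Lemma apery_in r : L (apery r).
Proof. by rewrite /apery mem_progression. Qed.

Lemma apery_mod r : r < m -> apery r %% m = r.
Proof. by move=> rm; rewrite /apery addnC modnMDl modn_small. Qed.

Lemma apery_sub_notin r t : r < m -> 0 < t -> t * m <= apery r ->
  ~~ L (apery r - t * m).
Proof.
rewrite /apery => rm t0 tm.
have tk : t <= apery_depth r by nia.
rewrite -addnBA ?leq_mul2r ?tk ?orbT // -mulnBl mem_progression; lia.
Qed.

(* Apery elements are at most c + m - 1: one step of m below lies under c. *)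
Lemma apery_lt r : r < m -> apery r < c + m.
Proof.
rewrite /apery => rm; case E: (apery_depth r) => [|k]; first by lia.
have : ~~ L (r + k * m) by rewrite mem_progression E ltnn.
apply: contraR; rewrite -leqNgt mulSnr => le_cm; apply: L_conductor; lia.
Qed.

Lemma apery_unique y : L y -> (y < m) || ~~ L (y - m) -> apery (y %% m) = y.
Proof.
move=> Ly Hy; set r := y %% m; set q := y %/ m.
have Ey : y = r + q * m by rewrite addnC -divn_eq.
have dq : apery_depth r <= q by rewrite -mem_progression -Ey.
suff qd : q <= apery_depth r.
  by rewrite /apery Ey; congr (_ + _ * _); apply/eqP; rewrite eqn_leq dq.
rewrite leqNgt; apply: contraL Hy => lt_dq.
have q0 : 0 < q by apply: leq_ltn_trans lt_dq.
have : L (r + q.-1 * m) by rewrite mem_progression -ltnS prednK.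
have -> : r + q.-1 * m = y - m by rewrite Ey -(prednK q0) mulSnr; lia.
move=> Lym; rewrite Lym orbF -leqNgt Ey; nia.
Qed.

Lemma sum_apery_depth : \sum_(0 <= r < m) apery_depth r = count (predC L) (iota 0 c).
Proof.
transitivity (count (predC L) (iota 0 (c * m))); first by rewrite count_iota_residues.
rewrite -(subnKC (leq_pmulr c m_gt0)) iotaD count_cat.
suff -> : count (predC L) (iota (0 + c) (c * m - c)) = 0 by rewrite addn0.
apply/eqP; rewrite -leqn0 leqNgt -has_count; apply/hasPn => i.
by rewrite mem_iota => /andP [ci _] /=; rewrite negbK L_conductor.
Qed.

Lemma sum_apery_double :
  (\sum_(0 <= r < m) apery r).*2 = m * (m.-1 + (count (predC L) (iota 0 c)).*2).
Proof.
rewrite big_split /= -big_distrl /= sum_apery_depth doubleD sum_iota_double.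
by rewrite mulnDr -doubleMr [_ * m]mulnC.
Qed.

Local Notation W := (c + m).-1.

Lemma apery_le r : r < m -> apery r <= W.
Proof. by move=> rm; rewrite -ltnS prednK ?addn_gt0 ?m_gt0 ?orbT // apery_lt. Qed.

Lemma sum_apery_compl :
  \sum_(0 <= r < m) (W - apery r) + \sum_(0 <= r < m) apery r = m * W.
Proof.
rewrite -big_split /= -{3}[m]subn0 -sum_nat_const_nat big_nat [in RHS]big_nat.
by apply: eq_bigr => r /andP [_ rm]; rewrite subnK ?apery_le.
Qed.

Lemma apery_sub r x : r < m -> x <= apery r -> L x -> L (apery r - x) ->
  apery ((apery r - x) %% m) = apery r - x.
Proof.
move=> rm xw Lx Lwx; apply: apery_unique => //.
case: ltnP => //= m_le; apply/negP => Lwxm.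
have le_w : 1 * m <= apery r by lia.
move: (apery_sub_notin rm (isT : 0 < 1) le_w).
by rewrite (_ : apery r - 1 * m = (apery r - x - m) + x) ?L_add //; lia.
Qed.

(* For fixed t, r |-> (apery r - t h) mod m is an injection between the two sets. *)
Lemma count_translates h t : L h ->
  count (fun r => (t * h <= apery r) && L (apery r - t * h)) (index_iota 0 m) <=
  count (fun r => t * h <= W - apery r) (index_iota 0 m).
Proof.
move=> Lh; set x := t * h; have Lx : L x by apply: mem_mul.
rewrite -!size_filter -(size_map (fun r => (apery r - x) %% m)); apply: uniq_leq_size.
- rewrite map_inj_in_uniq ?filter_uniq ?iota_uniq // => r1 r2.
  rewrite !mem_filter !mem_index_iota => /andP [/andP [x1 L1] /andP [_ r1m]].
  move=> /andP [/andP [x2 L2] /andP [_ r2m]] E.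
  have /eqP : apery r1 - x = apery r2 - x by rewrite -apery_sub // E apery_sub.
  by rewrite eqn_sub2rE // => /eqP E12; rewrite -(apery_mod r1m) E12 apery_mod.
- move=> y /mapP [r]; rewrite mem_filter mem_index_iota.
  move=> /andP [/andP [xw Lwx] /andP [_ rm]] ->.
  rewrite mem_filter mem_index_iota ltn_pmod // andbT /= apery_sub //.
  by have := apery_le rm; lia.
Qed.

Lemma rep_count_apery_multiplicity T r : r < m -> rep_count L T (apery r) m = 0.
Proof.
move=> rm; apply/eqP; rewrite -leqn0 leqNgt -has_count; apply/hasPn => t.
rewrite mem_iota => /andP [t_gt0 _]; rewrite negb_and -implybE; apply/implyP.
exact: apery_sub_notin.
Qed.

(* Summing [count_translates] over t and counting, for each r, the multiples
   t h <= W - apery r. *)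
Lemma sum_rep_count_apery h T : L h ->
  h * \sum_(0 <= r < m) rep_count L T (apery r) h <= \sum_(0 <= r < m) (W - apery r).
Proof.
move=> Lh; rewrite /rep_count.
rewrite (sum_count_exchange (fun r t => (t * h <= apery r) && L (apery r - t * h))).
apply: leq_trans (leq_mul (leqnn h) _) _.
  by apply: leq_sum => t _; apply: count_translates.
rewrite -(sum_count_exchange (fun r t => t * h <= W - apery r)) big_distrr.
by apply: leq_sum => r _; apply: count_mul_le.
Qed.

Lemma sum_apery_le (G : seq nat) : generates G L -> m \in G ->
  \sum_(0 <= r < m) apery r <= (size G).-1 * \sum_(0 <= r < m) (W - apery r).
Proof.
move=> G_gen mG.
have span_bound : \sum_(0 <= r < m) apery r <=
    \sum_(h <- G) h * \sum_(0 <= r < m) rep_count L (c + m) (apery r) h.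
  under [X in _ <= X]eq_bigr do rewrite big_distrr.
  rewrite exchange_big /= big_nat [X in _ <= X]big_nat; apply: leq_sum => r /andP [_ rm].
  apply: span_le_rep_counts => //; last exact: ltnW (apery_lt rm).
  exact/G_gen/apery_in.
have no_m : \sum_(0 <= r < m) rep_count L (c + m) (apery r) m = 0.
  by rewrite big_nat big1 // => r /andP [_ rm]; apply: rep_count_apery_multiplicity.
apply: leq_trans span_bound _.
rewrite (big_rem _ mG) /= no_m muln0 add0n -(size_rem mG) -sum1_size big_distrl /=.
rewrite big_seq [X in _ <= X]big_seq; apply: leq_sum => h; rewrite mul1n => /mem_rem hG.
by apply: sum_rep_count_apery; apply: (mem_generators G_gen hG).
Qed.
End Apery.

(* With S = sum of the Apery set and X = sum of its distances to W, Selmer's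
   formula turns S <= (e - 1) X into a bound on the number of gaps c - c'. *)
Lemma gap_inequality (e m c cp S X : nat) : 0 < e -> 0 < m -> cp <= c ->
  S.*2 = m * (m.-1 + (c - cp).*2) -> X + S = m * (c + m).-1 -> S <= e.-1 * X ->
  (c - cp).*2 + m.-1 <= e.-1 * (cp.*2 + m.-1).
Proof.
case: e => [//|e] _ m_gt0 le_cp S2 XS le_S /=.
rewrite -(subnK le_cp) addnK in S2 XS *; set g := c - cp in S2 XS *.
rewrite (_ : (g + cp + m).-1 = g + cp + m.-1) in XS; last by lia.
have eS : e.+1 * S <= e * (m * (g + cp + m.-1)) by rewrite -XS; nia.
have : m * (e.+1 * (m.-1 + g.*2)) <= m * (e * (g + cp + m.-1)).*2 by nia.
rewrite leq_pmul2l //; lia.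
Qed.

Local Open Scope ring_scope.

Lemma conductor_bound_rat (e m c cp : nat) : (0 < e)%N -> (0 < m)%N -> (cp <= c)%N ->
  ((c - cp).*2 + m.-1 <= e.-1 * (cp.*2 + m.-1))%N ->
  (c%:R / e%:R - ((m%:R - 1) * (e%:R - 2)) / (2 * e%:R) : rat) <= cp%:R.
Proof.
case: e => [//|e] _; case: m => [//|m] _ le_cp.
rewrite -(subnK le_cp) addnK; set g := (c - cp)%N.
rewrite -(ler_nat rat) -!muln2 /= !(natrM, natrD) => key.
rewrite -addn1 -[m.+1]addn1 !natrD.
have e1_gt0 : 0 < (e%:R + 1 : rat) by rewrite ltr_wpDl.
rewrite (_ : _ - _ = ((g%:R + cp%:R) - m%:R * (e%:R - 1) / 2) / (e%:R + 1)); last first.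
  by field; rewrite lt0r_neq0.
by rewrite ler_pdivrMr //; lra.
Qed.

Theorem theorem1 (L : pred nat) (G : seq nat) (c m : nat) :
  numerical_semigroup L ->
  minimal_generating_set G L ->
  is_conductor L c ->
  is_multiplicity L m ->
  let e := size G in
  (c%:R / e%:R - ((m%:R - 1) * (e%:R - 2)) / (2 * e%:R) : rat)
    <= (cprime L c)%:R.
Proof.
move=> [L_0 L_add _] [_ G_gen _] [L_cond _] L_mult /=.
have mG := multiplicity_mem_generators G_gen L_mult.
have [m_gt0 L_m _] := L_mult.
have cp_le : (cprime L c <= c)%N by rewrite -[c in (_ <= c)%N](size_iota 0) count_size.
have gaps : (c - cprime L c)%N = count (predC L) (iota 0 c).
  by rewrite -[c in (c - _)%N](size_iota 0) -(count_predC L) addKn.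
apply: conductor_bound_rat => //; first by case: (G) mG.
apply: (gap_inequality _ m_gt0 cp_le _ (sum_apery_compl L_0 L_add L_m m_gt0 L_cond)).
- by case: (G) mG.
- by rewrite gaps sum_apery_double.
- exact: sum_apery_le.
Qed.
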